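(* Let $\mathbf n=(n_1,\dots,n_r)$ with $r\ge1$ and $n_i\ge1$ for all $i$. If $k\ge\big\lfloor\frac12\sum_{i=1}^r n_i\big\rfloor$, then $\delta_{pr}(k,\mathbf n)\ge\sum_{i=1}^r n_i$.
   Context: $\Delta_m$ denotes the $m$-dimensional simplex; for $\mathbf n=(n_1,\dots,n_r)$, $\Delta_{\mathbf n}:=\Delta_{n_1}\times\dots\times\Delta_{n_r}$. The $k$-skeleton of a polytope is the poset of its faces of dimension at most $k$; two $k$-skeleta are combinatorially equivalent if these posets are isomorphic. A convex polytope is $(k,\mathbf n)$-PSN if its $k$-skeleton is combinatorially equivalent to that of $\Delta_{\mathbf n}$, and $(k,\mathbf n)$-PPSN if in addition it is the image under a linear projection of a polytope combinatorially equivalent to $\Delta_{\mathbf n}$. $\delta_{pr}(k,\mathbf n)$ is the smallest dimension of a $(k,\mathbf n)$-PPSN polytope. *)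

From HB Require Import structures.
From mathcomp Require Import all_boot all_order all_algebra.
Set Implicit Arguments. Unset Strict Implicit. Unset Printing Implicit Defensive.
Import Order.TTheory GRing.Theory Num.Theory.
Local Open Scope ring_scope.

Section Polytopes.
Variable R : realFieldType.

(* A polytope in R^d is presented as conv(V) for a finite family of points
   V : I -> 'rV[R]_d.  x lies in conv(V): *)
Definition in_conv (d : nat) (I : finType) (V : I -> 'rV[R]_d) (x : 'rV[R]_d) : Prop :=
  exists w : I -> R, (forall i, 0 <= w i) /\ \sum_i w i = 1 /\ x = \sum_i w i *: V i.

Definition conv_eq (d : nat) (I J : finType) (V : I -> 'rV[R]_d) (V' : J -> 'rV[R]_d) : Prop :=
  forall x, in_conv V x <-> in_conv V' x.

(* A face F is recorded by the set of indices {i | V i \in F}, which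
   determines F = conv(V restricted to it); distinct faces give distinct sets. *)
Definition is_face (d : nat) (I : finType) (V : I -> 'rV[R]_d) (S : {set I}) : Prop :=
  exists (c : 'cV[R]_d) (b : R),
    (forall i, (V i *m c) 0 0 <= b) /\ S = [set i | (V i *m c) 0 0 == b].

(* dimension of the face recorded by S is at most k (the empty face has
   dimension -1, so always qualifies); the dimension of conv{V i | i in S} is the
   rank of the differences V i - V i0, i in S. *)
Definition face_dim_le (d : nat) (I : finType) (V : I -> 'rV[R]_d) (S : {set I}) (k : nat) : bool :=
  if [pick i in S] is Some i0 then
    (\rank (\matrix_(j < #|I|, l < d)
              (if enum_val j \in S then ((V (enum_val j) - V i0) 0 l)%R else 0%R)) <= k)%N
  else true.

Definition skel_face (d : nat) (I : finType) (V : I -> 'rV[R]_d) (k : option nat) (S : {set I}) : Prop :=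
  is_face V S /\ (if k is Some k' then face_dim_le V S k' else True).

(* isomorphism of the posets (ordered by inclusion) of faces of dimension <= k
   (or of all faces when k = None) *)
Definition skel_equiv (d1 d2 : nat) (I1 I2 : finType) (k : option nat)
    (V1 : I1 -> 'rV[R]_d1) (V2 : I2 -> 'rV[R]_d2) : Prop :=
  exists f : {set I1} -> {set I2},
    (forall S, skel_face V1 k S -> skel_face V2 k (f S)) /\
    (forall T, skel_face V2 k T -> exists2 S, skel_face V1 k S & f S = T) /\
    (forall S S', skel_face V1 k S -> skel_face V1 k S' ->
        (S \subset S') = (f S \subset f S')).

(* The standard product of simplices Delta_n = Delta_{n_0} x ... x Delta_{n_(r-1)}:
   vertices are the choices (j_i)_i with j_i <= n_i, realized as the point whose
   (i, j) coordinate is 1 iff j = j_i (so Delta_{n_i} = conv(e_0,...,e_{n_i})). *)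
Definition maxn_of (r : nat) (n : 'I_r -> nat) : nat := \max_(i < r) n i.

Definition delta_vert (r : nat) (n : 'I_r -> nat) :=
  {f : {ffun 'I_r -> 'I_(maxn_of n).+1} | [forall i, (f i <= n i)%N]}.

Definition delta_pt (r : nat) (n : 'I_r -> nat) (v : delta_vert n)
    : 'rV[R]_(r * (maxn_of n).+1) :=
  mxvec (\matrix_(i < r, j < (maxn_of n).+1) ((val v i == j)%:R : R)).

Definition PSN (d : nat) (I : finType) (k r : nat) (n : 'I_r -> nat) (V : I -> 'rV[R]_d) : Prop :=
  skel_equiv (Some k) V (@delta_pt r n).

(* conv(V) is (k,n)-PPSN: PSN, and the image under a linear map of a polytope
   combinatorially equivalent to Delta_n *)
Definition PPSN (d : nat) (I : finType) (k r : nat) (n : 'I_r -> nat) (V : I -> 'rV[R]_d) : Prop :=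
  PSN k n V /\
  exists (D : nat) (J : finType) (W : J -> 'rV[R]_D) (A : 'M[R]_(D, d)),
    skel_equiv None W (@delta_pt r n) /\ conv_eq V (fun j => W j *m A).

End Polytopes.

From HB Require Import structures.
From mathcomp Require Import all_boot all_order all_algebra.
Set Implicit Arguments. Unset Strict Implicit. Unset Printing Implicit Defensive.
Import Order.TTheory GRing.Theory Num.Theory.

Local Open Scope ring_scope.

Section Faces.
Variables (R : realFieldType) (d : nat) (I : finType) (V : I -> 'rV[R]_d).

Local Notation val_at c i := ((V i *m c) 0 0).

Lemma face_set0 : is_face V set0.
Proof.
exists 0, 1; split=> [i|]; first by rewrite mulmx0 mxE ler01.
by apply/setP=> i; rewrite !inE mulmx0 mxE eq_sym oner_eq0.
Qed.

(* Faces are closed under intersection: add the two supporting functionals. *)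
Lemma face_setI S1 S2 : is_face V S1 -> is_face V S2 -> is_face V (S1 :&: S2).
Proof.
move=> [c1 [b1 [le1 ->]]] [c2 [b2 [le2 ->]]].
have valD i : val_at (c1 + c2) i = val_at c1 i + val_at c2 i.
  by rewrite mulmxDr mxE.
exists (c1 + c2), (b1 + b2); split=> [i|]; first by rewrite valD lerD.
apply/setP=> i; rewrite !inE valD.
have [lt1|ge1] := ltrP (val_at c1 i) b1.
  by rewrite (lt_eqF lt1) (lt_eqF (ltr_leD lt1 (le2 i))).
have -> : val_at c1 i = b1 by apply/eqP; rewrite eq_le le1.
by rewrite eqxx (inj_eq (addrI b1)).
Qed.

Definition diff_mx (S : {set I}) (i0 : I) : 'M[R]_(#|I|, d) :=
  \matrix_(j < #|I|, l < d)
     (if enum_val j \in S then (V (enum_val j) - V i0) 0 l else 0).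

Lemma row_diff_mx S i0 j :
  row j (diff_mx S i0) = if enum_val j \in S then V (enum_val j) - V i0 else 0.
Proof. by apply/rowP=> l; rewrite !mxE; case: ifP; rewrite ?mxE. Qed.

Lemma face_dim_le_span (S : {set I}) k p (H : 'M[R]_(p, d)) :
  (\rank H <= k)%N -> {in S &, forall x y, (V x - V y <= H)%MS} ->
  face_dim_le V S k.
Proof.
move=> rkH SH; rewrite /face_dim_le; case: pickP => [i0 i0S|//].
apply: leq_trans rkH; apply: mxrankS; apply/row_subP=> j.
rewrite -/(diff_mx S i0) row_diff_mx; case: ifP => [jS|_]; last exact: sub0mx.
exact: SH.
Qed.

Lemma face_dim_le_diffs (S : {set I}) k : face_dim_le V S k ->
  exists H : 'M[R]_(#|I|, d), (\rank H <= k)%N /\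
    {in S &, forall x y, (V x - V y <= H)%MS}.
Proof.
rewrite /face_dim_le; case: pickP => [i0 i0S rk|S0 _].
  exists (diff_mx S i0); split=> // x y xS yS.
  have row_x z : z \in S -> V z - V i0 = row (enum_rank z) (diff_mx S i0).
    by move=> zS; rewrite row_diff_mx enum_rankK zS.
  rewrite -[V x](subrK (V i0)) -[V y](subrK (V i0)) opprD addrACA subrr addr0.
  by rewrite row_x // row_x // addmx_sub ?eqmx_opp ?row_sub.
by exists 0; split; rewrite ?mxrank0 // => x y; rewrite S0.
Qed.

Lemma face_dim_le_subset (S S' : {set I}) k :
  S' \subset S -> face_dim_le V S k -> face_dim_le V S' k.
Proof.
move=> /subsetP S'S /face_dim_le_diffs [H [rkH SH]].
by apply: (face_dim_le_span rkH) => x y /S'S xS /S'S yS; apply: SH.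
Qed.

Lemma face_dim_le_set1 x k : face_dim_le V [set x] k.
Proof.
apply: (face_dim_le_span (H := 0 : 'M[R]_(1, d))); first by rewrite mxrank0.
by move=> y z; rewrite !inE => /eqP -> /eqP ->; rewrite subrr sub0mx.
Qed.

Lemma skel_face_set0 k : skel_face V k set0.
Proof.
split; first exact: face_set0.
by case: k => // k; rewrite /face_dim_le; case: pickP => // x; rewrite inE.
Qed.

Lemma skel_faceI k S1 S2 :
  skel_face V k S1 -> skel_face V k S2 -> skel_face V k (S1 :&: S2).
Proof.
move=> [F1 dim1] [F2 _]; split; first exact: face_setI.
by case: k dim1 => // k; apply: face_dim_le_subset; rewrite subsetIl.
Qed.

End Faces.

Section SkeletonIsomorphism.
Variables (R : realFieldType) (d1 d2 : nat) (I1 I2 : finType) (k : option nat).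
Variables (V1 : I1 -> 'rV[R]_d1) (V2 : I2 -> 'rV[R]_d2) (f : {set I1} -> {set I2}).

Hypothesis f_onto : forall T, skel_face V2 k T -> exists2 S, skel_face V1 k S & f S = T.
Hypothesis f_mono : forall S S', skel_face V1 k S -> skel_face V1 k S' ->
  (S \subset S') = (f S \subset f S').

Lemma skel_iso_set0 : f set0 = set0.
Proof.
have [S0 skS0 fS0] := f_onto (skel_face_set0 V2 k).
apply/eqP; rewrite -subset0 -fS0 -f_mono ?sub0set //; exact: skel_face_set0.
Qed.

(* A vertex x of the target skeleton has a representative point p of the source:
   p lies in a source face U exactly when x lies in the image face f U.
   (Take p in the face T with f T = [set x]; if p were in U while x is not in
   f U, the face U :&: T would map below [set x] and set0 alike.) *)
Lemma skel_iso_vertex x : skel_face V2 k [set x] ->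
  exists p, forall U, skel_face V1 k U -> (p \in U) = (x \in f U).
Proof.
move=> skx; have [T skT fT] := f_onto skx.
have /set0Pn [p pT] : T != set0.
  apply: contraTneq (set11 x) => T0.
  by rewrite -fT T0 skel_iso_set0 inE.
exists p => U skU; apply/idP/idP => [pU|xU]; last first.
  have : T \subset U by rewrite f_mono // fT sub1set.
  by move/subsetP; apply.
apply: contraTT pU => xU; have skUT := skel_faceI skU skT.
have fUT_U : f (U :&: T) \subset f U by rewrite -f_mono ?subsetIl.
have fUT_x : f (U :&: T) \subset [set x] by rewrite -fT -f_mono ?subsetIr.
have : f (U :&: T) \subset f set0.
  rewrite skel_iso_set0; apply/subsetP => y yUT.
  move: (subsetP fUT_x y yUT) (subsetP fUT_U y yUT); rewrite inE => /eqP ->.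
  by rewrite (negPf xU).
have sk0 := skel_face_set0 V1 k.
rewrite -f_mono ?subset0 // => /eqP/setP/(_ p).
by rewrite !inE pT andbT => ->.
Qed.

End SkeletonIsomorphism.

Section ProductOfSimplices.
Variables (R : realFieldType) (r : nat) (n : 'I_r -> nat).
Local Notation m := (maxn_of n).
Local Notation vertex := (delta_vert n).
Local Notation D := (@delta_pt R r n).

Definition coord_vec (i : 'I_r) (j : 'I_m.+1) : 'rV[R]_(r * m.+1) :=
  delta_mx 0 (mxvec_index i j).

Lemma delta_pt_sum (y : vertex) : D y = \sum_i coord_vec i (val y i).
Proof.
under eq_bigr do rewrite /coord_vec -mxvec_delta.
rewrite /delta_pt -linear_sum; congr mxvec; apply/matrixP=> i j; rewrite !mxE summxE.
rewrite (bigD1 i) //= big1 ?mxE ?eqxx ?addr0 1?eq_sym // => i' /negPf i'i.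
by rewrite mxE eq_sym i'i.
Qed.

Lemma delta_pt_dot (y : vertex) (c : 'cV[R]_(r * m.+1)) :
  (D y *m c) 0 0 = \sum_i c (mxvec_index i (val y i)) 0.
Proof.
rewrite delta_pt_sum mulmx_suml summxE; apply: eq_bigr => i _.
by rewrite -rowE mxE.
Qed.

Definition subproduct (A : 'I_r -> {set 'I_m.+1}) : {set vertex} :=
  [set y : vertex | [forall i, val y i \in A i]].

(* Subproducts are faces: the functional counting the coordinates outside A,
   negated, is at most 0 with equality exactly on the subproduct. *)
Lemma subproduct_face A : is_face D (subproduct A).
Proof.
pose c := - (mxvec (\matrix_(i, j) ((j \notin A i)%:R : R)))^T.
have val_c (y : vertex) : (D y *m c) 0 0 = - \sum_i ((val y i \notin A i)%:R : R).
  by rewrite delta_pt_dot -sumrN; apply: eq_bigr => i _; rewrite !mxE mxvecE mxE.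
have ge0 (y : vertex) i : 0 <= ((val y i \notin A i)%:R : R) by rewrite ler0n.
exists c, 0; split=> [y|]; first by rewrite val_c oppr_le0 sumr_ge0.
apply/setP=> y; rewrite !inE val_c oppr_eq0.
apply/forallP/eqP => [yA|/(psumr_eq0P (fun i _ => ge0 y i)) y0 i].
  by apply: big1 => i _; rewrite yA.
by move/eqP: (y0 i isT); rewrite pnatr_eq0; case: (_ \in _).
Qed.

Lemma set1_subproduct (x : vertex) : [set x] = subproduct (fun i => [set val x i]).
Proof.
apply/setP=> y; rewrite !inE; apply/eqP/forallP => [-> i|yx]; first by rewrite inE.
by apply: val_inj; apply/ffunP => i; apply/eqP; move: (yx i); rewrite inE.
Qed.

Lemma vertex_skel_face k (x : vertex) : skel_face D k [set x].
Proof.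
split; first by rewrite set1_subproduct; exact: subproduct_face.
by case: k => // k; exact: face_dim_le_set1.
Qed.

Lemma base_vertex_proof :
  [forall i, ([ffun=> ord0] : {ffun 'I_r -> 'I_m.+1}) i <= n i]%N.
Proof. by apply/forallP=> i; rewrite ffunE. Qed.

Definition base_vertex : vertex := exist (fun f => _) _ base_vertex_proof.

Lemma edge_vertex_proof (s : 'I_r * 'I_m.+1) :
  [forall i, ([ffun i => if (i == s.1) && (s.2 <= n s.1)%N then s.2 else ord0]
      : {ffun 'I_r -> 'I_m.+1}) i <= n i]%N.
Proof. by apply/forallP=> i; rewrite ffunE; case: ifP => [/andP [/eqP -> ->]|]. Qed.

Definition edge_vertex (s : 'I_r * 'I_m.+1) : vertex :=
  exist (fun f => _) _ (edge_vertex_proof s).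

(* The labels (i, j), 0 < j <= n i, of the edges of Delta_n at base_vertex. *)
Definition edge_labels : {set 'I_r * 'I_m.+1} :=
  [set s : 'I_r * 'I_m.+1 | (0 < s.2 <= n s.1)%N].

Lemma card_edge_labels : #|edge_labels| = (\sum_(i < r) n i)%N.
Proof.
rewrite -sum1_card big_mkcond /=.
transitivity (\sum_(i < r) \sum_(j < m.+1) (if (i, j) \in edge_labels then 1 else 0))%N.
  by rewrite pair_big /=; apply: eq_bigr => [[i j]].
apply: eq_bigr => i _.
have n_le_m : (n i <= m)%N by exact: (@leq_bigmax _ n i).
rewrite (eq_bigr (fun j : 'I_m.+1 => (0 < j <= n i : nat))) => [|j _]; last first.
  by rewrite inE; case: (_ && _).
rewrite -(big_mkord xpredT (fun j => (0 < j <= n i : nat))).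
rewrite (big_cat_nat _ (n := (n i).+1)) //= [X in (_ + X)%N]big1_seq => [|j].
  rewrite addn0 big_ltn // add0n (eq_big_nat _ _ (F2 := fun=> 1%N)) => [|j /andP[]].
    by rewrite sum_nat_const_nat subn1 muln1.
  by move=> j0 jn; rewrite j0 -ltnS jn.
by rewrite /= mem_index_iota ltnNge => /andP [/negPf ->]; rewrite andbF.
Qed.

Definition corner_face (S : {set 'I_r * 'I_m.+1}) : {set vertex} :=
  subproduct (fun i => [set j | (j == ord0) || ((i, j) \in S)]).

Lemma base_vertex_corner S : base_vertex \in corner_face S.
Proof. by rewrite inE; apply/forallP => i; rewrite inE ffunE eqxx. Qed.

Lemma edge_vertex_corner S s :
  s \in edge_labels -> (edge_vertex s \in corner_face S) = (s \in S).
Proof.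
case: s => i j; rewrite inE /= => /andP [j0 jn].
rewrite inE; apply/forallP/idP => [/(_ i)|ijS i']; rewrite inE ffunE ?eqxx jn /=.
  by case/orP => // /eqP j_0; rewrite j_0 in j0.
by case: (i' =P i) => [->|_] /=; rewrite ?ijS ?eqxx ?orbT.
Qed.

Definition edge_vec (s : 'I_r * 'I_m.+1) := coord_vec s.1 s.2 - coord_vec s.1 ord0.

Definition edge_mx (S : {set 'I_r * 'I_m.+1}) : 'M[R]_(#|S|, r * m.+1) :=
  \matrix_(t < #|S|) edge_vec (enum_val t).

Lemma edge_vec_sub S (y : vertex) i :
  y \in corner_face S -> (edge_vec (i, val y i) <= edge_mx S)%MS.
Proof.
rewrite inE => /forallP/(_ i); rewrite inE => /orP [/eqP y0|yS].
  by rewrite /edge_vec /= y0 subrr sub0mx.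
suff -> : edge_vec (i, val y i) = row (enum_rank_in yS (i, val y i)) (edge_mx S).
  exact: row_sub.
by rewrite rowK enum_rankK_in.
Qed.

Lemma corner_face_dim (S : {set 'I_r * 'I_m.+1}) k :
  (#|S| <= k)%N -> face_dim_le D (corner_face S) k.
Proof.
move=> Sk; apply: (face_dim_le_span (H := edge_mx S)).
  exact: leq_trans (rank_leq_row _) Sk.
move=> y z yS zS.
have -> : D y - D z = \sum_i (edge_vec (i, val y i) - edge_vec (i, val z i)).
  by rewrite !delta_pt_sum -sumrB; apply: eq_bigr => i _; rewrite opprB addrA subrK.
apply: summx_sub => i _.
by rewrite addmx_sub ?eqmx_opp ?edge_vec_sub.
Qed.

Lemma corner_skel_face (S : {set 'I_r * 'I_m.+1}) k :
  (#|S| <= k)%N -> skel_face D (Some k) (corner_face S).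
Proof. by split; [exact: subproduct_face | exact: corner_face_dim]. Qed.

End ProductOfSimplices.

Section Neighborly.
Variable R : realFieldType.

Definition neg_coords p (w : 'rV[R]_p) : {set 'I_p} := [set t | w 0 t < 0].
Definition pos_coords p (w : 'rV[R]_p) : {set 'I_p} := [set t | 0 < w 0 t].

Lemma neg_coordsN p (w : 'rV[R]_p) : neg_coords (- w) = pos_coords w.
Proof. by apply/setP=> t; rewrite !inE mxE oppr_lt0. Qed.

Lemma pos_coordsN p (w : 'rV[R]_p) : pos_coords (- w) = neg_coords w.
Proof. by apply/setP=> t; rewrite !inE mxE oppr_gt0. Qed.

Lemma balanced_dependence p q (U : 'M[R]_(p, q)) : (q < p)%N ->
  exists w : 'rV[R]_p,
    [/\ w *m U = 0, w != 0 & (#|neg_coords w| <= #|pos_coords w|)%N].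
Proof.
move=> qp; have /rowV0Pn [w /sub_kermxP wU w0] : kermx U != 0.
  by rewrite -mxrank_eq0 mxrank_ker subn_eq0 -ltnNge (leq_ltn_trans (rank_leq_col U)).
have [le_neg_pos|/ltnW le_pos_neg] := leqP #|neg_coords w| #|pos_coords w|.
  by exists w.
exists (- w); rewrite mulNmx wU oppr0 oppr_eq0 neg_coordsN pos_coordsN.
by split.
Qed.

(* Otherwise apply
   the hyperplane of A := the negative coefficients of a balanced dependence:
   the dependence makes a sum of nonpositive terms vanish, forcing some u t with
   positive coefficient onto the hyperplane. *)
Lemma neighborly_independent p d (u0 : 'rV[R]_d) (u : 'I_p -> 'rV[R]_d) :
  (forall A : {set 'I_p}, (#|A|.*2 <= p)%N -> exists (c : 'cV[R]_d) (b : R),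
     (u0 *m c) 0 0 = b /\ forall t, (u t *m c) 0 0 <= b ?= iff (t \in A)) ->
  (p <= d)%N.
Proof.
move=> hyperplane; rewrite leqNgt; apply/negP => dp.
pose U := \matrix_(t < p) (u t - u0).
have [w [wU w0 neg_pos]] := balanced_dependence U dp.
have [t0 t0pos] : exists t0, t0 \in pos_coords w.
  apply/set0Pn; apply: contraNneq w0 => pos0; apply/eqP/rowP => t; rewrite mxE.
  move: neg_pos; rewrite pos0 cards0 leqn0 cards_eq0 => /eqP/setP/(_ t).
  move/setP: pos0 => /(_ t); rewrite !inE.
  by case: ltrgtP.
have disj : neg_coords w :&: pos_coords w = set0.
  by apply/setP => t; rewrite !inE; case: ltrgtP.
have neg_half : (#|neg_coords w|.*2 <= p)%N.
  rewrite -addnn (leq_trans (leq_add (leqnn _) neg_pos)) //.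
  by rewrite -cardsUI disj cards0 addn0 (leq_trans (max_card _)) ?card_ord.
have [c [b [u0c uc]]] := hyperplane _ neg_half.
pose term t := w 0 t * ((u t *m c) 0 0 - b).
have term_le0 t : term t <= 0.
  rewrite /term; have [neg|pos|->] := ltrgtP (w 0 t) 0; last by rewrite mul0r.
    have /eqP -> : (u t *m c) 0 0 == b by rewrite (uc t).2 inE.
    by rewrite subrr mulr0.
  by rewrite pmulr_rle0 // subr_le0 (uc t).1.
have sum_term : \sum_t term t = 0.
  transitivity ((w *m U *m c) 0 0); last by rewrite wU mul0mx mxE.
  rewrite -mulmxA mxE; apply: eq_bigr => t _.
  have rowUc : (U *m c) t 0 = (row t U *m c) 0 0.
    by rewrite -row_mul [RHS]mxE.
  rewrite /term rowUc rowK mulmxBl -u0c; congr (_ * _).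
  by rewrite [RHS]mxE [X in _ = _ + X]mxE.
have : term t0 = 0.
  apply/eqP; rewrite -oppr_eq0; apply/eqP.
  apply: (@psumr_eq0P _ _ xpredT (fun t => - term t)) => // [t _|].
    by rewrite oppr_ge0.
  by rewrite sumrN sum_term oppr0.
move=> /eqP; rewrite mulf_eq0 subr_eq0 (uc t0).2 => /orP [/eqP w_t0|t0neg].
  by move: t0pos; rewrite inE w_t0 ltxx.
by move/setP: disj => /(_ t0); rewrite in_setI in_set0 t0neg t0pos.
Qed.

End Neighborly.

(* Transporting the corner faces of Delta_n back along the skeleton isomorphism,
   the representatives of base_vertex and of the N edge vertices form a
   configuration to which neighborly_independent applies. *)
Lemma PSN_neighborly (R : realFieldType) (r : nat) (n : 'I_r -> nat) (k d : nat)
    (I : finType) (V : I -> 'rV[R]_d) :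
  ((\sum_(i < r) n i)./2 <= k)%N -> PSN k n V ->
  exists (u0 : 'rV[R]_d) (u : 'I_#|edge_labels n| -> 'rV[R]_d),
    forall A : {set 'I_#|edge_labels n|}, (#|A|.*2 <= #|edge_labels n|)%N ->
    exists (c : 'cV[R]_d) (b : R),
      (u0 *m c) 0 0 = b /\ forall t, (u t *m c) 0 0 <= b ?= iff (t \in A).
Proof.
move=> half_le_k [f [_ [f_onto f_mono]]].
have [rep repP] := fin_all_exists (fun x : delta_vert n =>
  skel_iso_vertex f_onto f_mono (vertex_skel_face R (Some k) x)).
exists (V (rep (base_vertex n))), (fun t => V (rep (edge_vertex (enum_val t)))).
move=> A A_half; pose S := [set enum_val t | t in A].
have [U skU fU] : exists2 U, skel_face V (Some k) U & f U = corner_face S.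
  apply: f_onto; apply: corner_skel_face.
  rewrite card_imset; last exact: enum_val_inj.
  by rewrite (leq_trans _ half_le_k) // geq_half_double -(card_edge_labels n).
have [c [b [le_b defU]]] := skU.1.
have on_face x : ((V (rep x) *m c) 0 0 == b) = (x \in corner_face S).
  by rewrite -fU -repP // defU inE.
exists c, b; split; first by apply/eqP; rewrite on_face base_vertex_corner.
move=> t; split; first exact: le_b.
by rewrite on_face edge_vertex_corner ?enum_valP // mem_imset //; exact: enum_val_inj.
Qed.

Theorem theorem4p7 (R : realFieldType) (r : nat) (n : 'I_r -> nat) (k : nat)
    (d : nat) (I : finType) (V : I -> 'rV[R]_d) :
  (0 < r)%N -> (forall i, (0 < n i)%N) ->
  ((\sum_(i < r) n i)./2 <= k)%N ->
  PPSN k n V ->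
  (\sum_(i < r) n i <= d)%N.
Proof.
move=> _ _ half_le_k [psn _].
have [u0 [u neighborly]] := PSN_neighborly half_le_k psn.
by rewrite -card_edge_labels; exact: neighborly_independent neighborly.
Qed.
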